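(* Let $K$ be an algebraically closed field and let $d,n$ be integers with $1<d<n$, $\gcd(n,d)=1$ and $\operatorname{char}(K)\nmid d$. Let $m>n$ be an integer and $\ell:=m/d$. Let $a,A\in K$ with $A\neq 0$. (a) Suppose $v(x)\in K[x]$ is such that $h(x)=A(x-a)^m+v(x)^d$ has degree $n$. Then $d\mid m$, $\deg(v)=\ell$, the leading coefficient $B$ of $v$ satisfies $B^d=-A$, and $v(x)=B(x-a)^{\ell}+q(x)$ with $q(x)\in K[x]$ a nonzero polynomial of degree $n-m+\ell$. In particular $n-m+\ell\geq 0$, i.e. $n\geq m(1-1/d)$. (b) Assume $d\mid m$ and $n-m+\ell\geq 0$. Let $q(x)\in K[x]$ be any polynomial of degree $n-m+\ell$, choose $B\in K$ with $A=-B^d$, and put $v(x):=Bx^{\ell}+q(x)$. Then $\deg(v)=\ell\geq 2$ and the polynomial $h(x)=Ax^m+v(x)^d$ has degree $n$. *)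

From HB Require Import structures.
From mathcomp Require Import all_boot all_order all_algebra.
Set Implicit Arguments. Unset Strict Implicit. Unset Printing Implicit Defensive.

From mathcomp Require Import all_boot all_order all_algebra.
From mathcomp Require Import zify.
Import GRing.Theory.
Local Open Scope ring_scope.

Set Implicit Arguments.
Unset Strict Implicit.
Unset Printing Implicit Defensive.

(* Since [m > n], the top term of [A (x - a)^m] must cancel against that of
   [v^d], which forces [m = l d] and [v = B (x - a)^l + q] with [B^d = -A]
   and [deg q < l].  Writing [w := B (x - a)^l], so that [w^d = -A (x - a)^m],
   the polynomial [h] becomes
     [(w + q)^d - w^d = q * \sum_(i < d) (w + q)^(d-1-i) w^i];
   every summand has degree [l (d - 1)] and leading coefficient [B^(d-1)], so
   the sum has leading coefficient [d B^(d-1)], nonzero as [char K] does not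
   divide [d].  Hence [deg h = deg q + l (d - 1)], which gives both (a) and
   (b). *)

Lemma lt_size_polyD (R : nzRingType) (p r : {poly R}) : p != 0 ->
  (size (p + r)%R < size p)%N = (size r == size p) && (lead_coef r == - lead_coef p).
Proof.
move=> p_neq0; have size_p := polySpred p_neq0.
apply/idP/andP => [lt_pr_p | [/eqP size_r /eqP lead_r]].
  have [lt_r_p | lt_p_r | eq_rp] := ltngtP (size r) (size p).
  - by move: lt_pr_p; rewrite size_polyDl ?ltnn.
  - by move: lt_pr_p; rewrite addrC size_polyDl // ltnNge ltnW.
  split=> //.
  have /leq_sizeP/(_ (size p).-1 (leqnn _)) : (size (p + r)%R <= (size p).-1)%N.
    by rewrite -ltnS -size_p.
  have lead_r : lead_coef r = r`_(size p).-1 by rewrite lead_coefE eq_rp.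
  by rewrite coefD -lead_coefE -lead_r => /eqP; rewrite addrC addr_eq0.
rewrite size_p ltnS; apply/leq_sizeP => j; rewrite leq_eqVlt => /orP[/eqP <-|].
  by rewrite coefD -lead_coefE -size_r -lead_coefE lead_r subrr.
by rewrite -ltnS -size_p => lt_p_j; rewrite coefD !nth_default ?addr0 ?size_r.
Qed.

Lemma size_sum_same_lead (R : nzRingType) (I : finType) (F : I -> {poly R})
    (N : nat) (c : R) :
  (forall i, size (F i) = N.+1) -> (forall i, lead_coef (F i) = c) ->
  c *+ #|I| != 0 -> size (\sum_i F i) = N.+1.
Proof.
move=> size_F lead_F cI_neq0; apply/anti_leq/andP; split.
  apply/leq_sizeP => j lt_N_j; rewrite coef_sum big1 // => i _.
  by rewrite nth_default ?size_F.
have coefN_sum : (\sum_i F i)`_N = c *+ #|I|.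
  rewrite coef_sum -sumr_const; apply: eq_bigr => i _.
  by rewrite -(lead_F i) lead_coefE size_F.
rewrite ltnNge; apply: contra cI_neq0 => /leq_sizeP/(_ N (leqnn N)).
by rewrite coefN_sum => ->.
Qed.

Lemma size_exprD_sub (R : idomainType) (w q : {poly R}) (d : nat) :
  d%:R != 0 :> R -> q != 0 -> (size q < size w)%N ->
  size ((w + q) ^+ d - w ^+ d) = (size q + (size w).-1 * d.-1)%N.
Proof.
move=> d_neq0 q_neq0 lt_q_w.
have d_gt0 : (0 < d)%N by rewrite lt0n; apply: contraNneq d_neq0 => ->.
have w_neq0 : w != 0 by rewrite -size_poly_gt0 (leq_ltn_trans _ lt_q_w).
have lw_neq0 : lead_coef w != 0 by rewrite lead_coef_eq0.
have size_wq : size (w + q) = size w by rewrite size_polyDl.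
have lead_wq : lead_coef (w + q) = lead_coef w by rewrite lead_coefDl.
set t := fun i : 'I_d => (w + q) ^+ (d.-1 - i) * w ^+ i.
have le_i_d1 (i : 'I_d) : (i <= d.-1)%N by rewrite -ltnS prednK.
have lead_t i : lead_coef (t i) = lead_coef w ^+ d.-1.
  by rewrite lead_coefM !lead_coef_exp lead_wq -exprD subnK.
have size_t i : size (t i) = ((size w).-1 * d.-1).+1.
  have pow_neq0 p k : lead_coef p = lead_coef w -> p ^+ k != 0.
    by move=> lead_p; rewrite -lead_coef_eq0 lead_coef_exp lead_p expf_neq0.
  rewrite size_mul ?pow_neq0 // (polySpred (pow_neq0 _ _ lead_wq)).
  rewrite (polySpred (pow_neq0 w i erefl)) addSn /= addnS !size_exp size_wq.
  by rewrite -mulnDr subnK.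
have size_sum : size (\sum_i t i) = ((size w).-1 * d.-1).+1.
  apply: size_sum_same_lead size_t lead_t _.
  by rewrite card_ord -mulr_natr mulf_neq0 ?expf_neq0.
have sum_neq0 : \sum_i t i != 0 by rewrite -size_poly_gt0 size_sum.
by rewrite subrXX addrAC subrr add0r size_mul // size_sum addnS.
Qed.

Lemma size_cancel_exp_XsubC (R : idomainType) (a A B : R) (l d : nat)
    (q : {poly R}) :
  d%:R != 0 :> R -> B != 0 -> B ^+ d = - A -> q != 0 -> (size q <= l)%N ->
  size (A *: ('X - a%:P) ^+ (l * d) + (B *: ('X - a%:P) ^+ l + q) ^+ d)
    = (size q + l * d.-1)%N.
Proof.
move=> d_neq0 B_neq0 BdA q_neq0 le_q_l.
set w := B *: ('X - a%:P) ^+ l.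
have size_w : size w = l.+1 by rewrite size_scale // size_exp_XsubC.
have -> : A *: ('X - a%:P) ^+ (l * d) = - w ^+ d.
  by rewrite exprZn BdA scaleNr opprK exprM.
by rewrite addrC size_exprD_sub // size_w.
Qed.

Lemma power_sum_low_size_shape (R : idomainType) (d n m : nat) (a A : R)
    (v : {poly R}) :
  d%:R != 0 :> R -> (n < m)%N -> A != 0 ->
  size (A *: ('X - a%:P) ^+ m + v ^+ d) = n.+1 ->
  [/\ (d %| m)%N,
      size v = (m %/ d).+1,
      lead_coef v ^+ d = - A,
      exists q : {poly R},
        [/\ q != 0, ((size q).-1 + m = n + m %/ d)%N &
            v = lead_coef v *: ('X - a%:P) ^+ (m %/ d) + q]
    & (m <= n + m %/ d)%N].
Proof.
move=> d_neq0 lt_n_m A_neq0 size_h.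
have d_gt0 : (0 < d)%N by rewrite lt0n; apply: contraNneq d_neq0 => ->.
set p := A *: ('X - a%:P) ^+ m.
have size_p : size p = m.+1 by rewrite size_scale // size_exp_XsubC.
have p_neq0 : p != 0 by rewrite -size_poly_gt0 size_p.
have /andP[/eqP size_vd /eqP lead_vd] : (size (v ^+ d) == size p) &&
    (lead_coef (v ^+ d) == - lead_coef p).
  by rewrite -lt_size_polyD // size_h size_p.
have v_neq0 : v != 0.
  by apply/eqP=> v0; move: size_vd; rewrite v0 expr0n gtn_eqF // size_poly0 size_p.
have size_vm : ((size v).-1 * d = m)%N by rewrite -size_exp size_vd size_p.
set l := (m %/ d)%N.
have m_eq : m = (l * d)%N by rewrite /l -size_vm mulnK.
have size_v : size v = l.+1 by rewrite /l -size_vm mulnK // -polySpred.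
set B := lead_coef v.
have B_neq0 : B != 0 by rewrite lead_coef_eq0.
have BdA : B ^+ d = - A.
  by rewrite -lead_coef_exp lead_vd lead_coefZ lead_coef_exp lead_coefXsubC expr1n mulr1.
set w := B *: ('X - a%:P) ^+ l.
have size_w : size w = l.+1 by rewrite size_scale // size_exp_XsubC.
set q := v - w.
have v_eq : v = w + q by rewrite addrC subrK.
have lead_w : lead_coef w = B.
  by rewrite lead_coefZ lead_coef_exp lead_coefXsubC expr1n mulr1.
have lt_q_v : (size q < size v)%N.
  by rewrite /q lt_size_polyD // size_polyN lead_coefN size_w size_v lead_w !eqxx.
have q_neq0 : q != 0.
  apply/eqP=> q0; move: size_h; rewrite v_eq q0 addr0 exprZn BdA scaleNr.
  by rewrite -exprM -m_eq addrN size_poly0.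
have le_q_l : (size q <= l)%N by rewrite -ltnS -size_v.
have := size_cancel_exp_XsubC a d_neq0 B_neq0 BdA q_neq0 le_q_l.
rewrite -m_eq -v_eq size_h => size_q.
have ld_eq : (l * d = l + l * d.-1)%N by rewrite -{1}(prednK d_gt0) mulnS.
have q_gt0 : (0 < size q)%N by rewrite size_poly_gt0.
split; [by rewrite m_eq dvdn_mull | by [] | by [] | | lia].
by exists q; split=> //; lia.
Qed.

Lemma power_sum_low_size_construction (R : idomainType) (d n m : nat) (A : R) :
  d%:R != 0 :> R -> (d < n)%N -> (n < m)%N -> A != 0 ->
  (d %| m)%N -> (m <= n + m %/ d)%N ->
  forall (q : {poly R}) (B : R),
    size q = (n + m %/ d - m).+1 ->
    A = - B ^+ d ->
    let v := B *: 'X ^+ (m %/ d) + q in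
    [/\ size v = (m %/ d).+1, (2 <= m %/ d)%N &
        size (A *: 'X ^+ m + v ^+ d) = n.+1].
Proof.
move=> d_neq0 lt_d_n lt_n_m A_neq0 d_dvd_m le_m_nl q B size_q AB v.
have d_gt0 : (0 < d)%N by rewrite lt0n; apply: contraNneq d_neq0 => ->.
set l := (m %/ d)%N in le_m_nl size_q v *.
have m_eq : m = (l * d)%N by rewrite divnK.
have B_neq0 : B != 0.
  by apply: contraNneq A_neq0 => B0; rewrite AB B0 expr0n gtn_eqF ?oppr0.
have le_q_l : (size q <= l)%N by rewrite size_q; lia.
have size_w : size (B *: 'X ^+ l) = l.+1 by rewrite size_scale ?size_polyXn.
split.
- by rewrite size_polyDl size_w.
- by rewrite -(ltn_pmul2r d_gt0) mul1n -m_eq (ltn_trans lt_d_n).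
have BdA : B ^+ d = - A by rewrite AB opprK.
have q_neq0 : q != 0 by rewrite -size_poly_gt0 size_q.
have X_eq : 'X = 'X - 0%:P :> {poly R} by rewrite subr0.
rewrite /v X_eq m_eq size_cancel_exp_XsubC // size_q.
have ld_eq : (l * d = l + l * d.-1)%N by rewrite -{1}(prednK d_gt0) mulnS.
lia.
Qed.

Theorem proposition5p3 (K : closedFieldType) (d n m : nat) (a A : K)
  (hd1 : (1 < d)%N) (hdn : (d < n)%N) (hcop : coprime n d)
  (hchar : forall p : nat, p \in [pchar K] -> ~~ (p %| d)%N)
  (hmn : (n < m)%N) (hA : A != 0) :
  (* (a) *)
  (forall v : {poly K},
     size (A *: ('X - a%:P) ^+ m + v ^+ d) = n.+1 ->
     [/\ (d %| m)%N,
         size v = (m %/ d).+1,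
         lead_coef v ^+ d = - A,
         exists q : {poly K},
           [/\ q != 0, ((size q).-1 + m = n + m %/ d)%N &
               v = lead_coef v *: ('X - a%:P) ^+ (m %/ d) + q]
       & (m <= n + m %/ d)%N])
  /\
  (* (b) *)
  ((d %| m)%N -> (m <= n + m %/ d)%N ->
   forall (q : {poly K}) (B : K),
     size q = (n + m %/ d - m).+1 ->
     A = - B ^+ d ->
     let v := B *: 'X ^+ (m %/ d) + q in
     [/\ size v = (m %/ d).+1, (2 <= m %/ d)%N &
         size (A *: 'X ^+ m + v ^+ d) = n.+1]).
Proof.
have d_gt0 : (0 < d)%N by exact: ltnW.
have d_neq0 : d%:R != 0 :> K.
  rewrite natf_neq0_pchar; apply/(pnatP _ d_gt0) => p _ p_dvd_d.
  by apply/negP => /hchar; rewrite p_dvd_d.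
split; first by move=> v; apply: power_sum_low_size_shape.
exact: power_sum_low_size_construction.
Qed.
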